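(* Let $r\in(0,1)$, $k\geq1$ an integer, $\beta\in(0,1)$, and $\gamma, C$ real. Let $W_1,W_2,\dots$ be i.i.d.\ copies of a positive random variable $W$ (an i.i.d.\ multiplicative cascade with scale ratio $r$) whose scaling exponents, defined by $\mathbb{E}[W^p]=r^{\zeta_p}$, satisfy $\zeta_p=\gamma p+C(1-\beta^{p/k})$. Then the distribution of $W$ is uniquely determined by its moments. *)

From HB Require Import structures.
From mathcomp Require Import all_boot all_order all_algebra.
From mathcomp Require Import all_classical all_reals all_analysis.
Set Implicit Arguments. Unset Strict Implicit. Unset Printing Implicit Defensive.
Import Order.TTheory GRing.Theory Num.Theory.
Local Open Scope classical_set_scope.
Local Open Scope ring_scope.

Definition zeta_exp (R : realType) (gamma C beta : R) (k : nat) (p : R) : R :=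
  gamma * p + C * (1 - beta `^ (p / k%:R)).

Definition determined_by_moments (R : realType) d (T : measurableType d)
  (P : probability T R) (W : T -> R) : Prop :=
  forall d' (T' : measurableType d') (P' : probability T' R) (V : T' -> R),
    measurable_fun setT V ->
    (forall n : nat, P'.-integrable setT (fun x => ((V x) ^+ n)%:E) /\
       (\int[P']_x ((V x) ^+ n)%:E = \int[P]_x ((W x) ^+ n)%:E)%E) ->
    forall A : set R, measurable A -> P (W @^-1` A) = P' (V @^-1` A).

From HB Require Import structures.
From mathcomp Require Import all_boot all_order all_algebra.
From mathcomp Require Import all_classical all_reals all_analysis.
From mathcomp Require Import measurable_realfun.
From mathcomp.algebra_tactics Require Import ring lra.
Import Order.TTheory GRing.Theory Num.Theory.
Import numFieldNormedType.Exports.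
Local Open Scope classical_set_scope.
Local Open Scope ring_scope.

(* Since 0 < r < 1 and C (1 - beta^(n/k)) >= -|C|, the moments satisfy
   E[W^n] <= r^(-|C|) (r^gamma)^n.  Markov's inequality then bounds
   P(|W| >= 2 r^gamma) by r^(-|C|) 4^(-n) for every n, so W is almost surely
   bounded, and so is any V with the same moments.  For bounded variables, equal
   moments give equal expectations of polynomials, hence, by dominated
   convergence, of |x - c| (a rescaled limit of the polynomials p_0 = 0,
   p_(n+1) = p_n + (u^2 - p_n^2)/2, which converge to |u| on [-1, 1]), hence of
   piecewise affine ramps, hence of the indicators of the half-lines ]-oo, t[,
   which generate the Borel sets. *)

Section abs_approximation.
Context {R : realType}.

Fixpoint abs_approx (n : nat) : {poly R} :=
  if n is m.+1 then abs_approx m + ('X ^+ 2 - abs_approx m ^+ 2) * (2^-1)%:P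
  else 0.

Lemma horner_abs_approxS n u :
  (abs_approx n.+1).[u] = (abs_approx n).[u] + (u ^+ 2 - (abs_approx n).[u] ^+ 2) / 2.
Proof. by rewrite /= !hornerE. Qed.

Lemma abs_approx_bounds n u : `|u| <= 1 -> 0 <= (abs_approx n).[u] <= `|u|.
Proof.
move=> u1; elim: n => [|n /andP[p0 pu]]; first by rewrite horner0 lexx normr_ge0.
rewrite horner_abs_approxS -real_normK ?num_real //.
set a := `|u| in u1 pu *; set p := (abs_approx n).[u] in p0 pu *.
have a0 : 0 <= a := normr_ge0 u.
apply/andP; split; nra.
Qed.

(* Each step shrinks the error [|u| - p] by the factor [1 - (|u| + p)/2 <= 1 - |u|/2]. *)
Lemma abs_approx_err n u : `|u| <= 1 ->
  `|u| - (abs_approx n).[u] <= `|u| * (1 - `|u| / 2) ^+ n.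
Proof.
move=> u1; elim: n => [|n IH]; first by rewrite horner0 subr0 expr0 mulr1.
have /andP[p0 pu] := abs_approx_bounds n _ u1.
rewrite horner_abs_approxS -real_normK ?num_real // [(1 - _) ^+ n.+1]exprSr.
set a := `|u| in u1 pu IH *; set p := (abs_approx n).[u] in p0 pu IH *.
set q := (1 - a / 2) ^+ n in IH *.
have a0 : 0 <= a := normr_ge0 u.
have q0 : 0 <= q by rewrite exprn_ge0 //; lra.
have h1 : 0 <= (a - p) * p by apply: mulr_ge0; lra.
have h2 : 0 <= (a * q - (a - p)) * (1 - a / 2) by apply: mulr_ge0; lra.
nra.
Qed.

Lemma cvg_abs_approx u : `|u| <= 1 -> (abs_approx n).[u] @[n --> \oo] --> `|u|.
Proof.
move=> u1; have [u0|u0] := eqVneq u 0.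
  subst u; apply: cvg_near_cst; apply: nearW => n.
  have := abs_approx_bounds n _ u1; rewrite normr0 => /andP[p0 p1].
  by apply/eqP; rewrite eq_le p0 p1.
apply: (@squeeze_cvgr _ _ _ _ (fun n => `|u| - geometric `|u| (1 - `|u| / 2) n) (cst `|u|)).
- apply: nearW => n; have := abs_approx_err n _ u1; have := abs_approx_bounds n _ u1.
  by rewrite /geometric /= => /andP[p0 p1] perr; apply/andP; split; lra.
- rewrite -[X in _ --> X]subr0; apply: cvgB; first exact: cvg_cst.
  have a0 : 0 < `|u| by rewrite normr_gt0.
  by apply: cvg_geometric; rewrite ger0_norm; lra.
- exact: cvg_cst.
Qed.

End abs_approximation.

Section ramp.
Context {R : realType}.
Implicit Types (t e x c : R).

(* [ramp t e] is [1] on [`]-oo, t - e]], [0] on [`[t, +oo[] and affine in between. *)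
Definition ramp t e x : R := (`|x - t| - `|x - (t - e)|) / (2 * e) + 2^-1.

Lemma ramp_left t e x : 0 < e -> x <= t - e -> ramp t e x = 1.
Proof.
move=> e0 xt; rewrite /ramp !ler0_norm ?subr_le0 //; last by lra.
by field; rewrite gt_eqF.
Qed.

Lemma ramp_right t e x : 0 < e -> t <= x -> ramp t e x = 0.
Proof.
move=> e0 tx; rewrite /ramp !ger0_norm ?subr_ge0 //; last by lra.
by field; rewrite gt_eqF.
Qed.

Lemma ramp_bound t e x : 0 < e -> `|ramp t e x| <= 1.
Proof.
move=> e0; have dist : `| `|x - t| - `|x - (t - e)| | <= e.
  apply: le_trans (ler_dist_dist _ _) _.
  by rewrite (_ : x - t - (x - (t - e)) = - e) ?normrN ?gtr0_norm //; ring.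
rewrite /ramp; apply: le_trans (ler_normD _ _) _.
rewrite normrM [`|(2 * e)^-1|]gtr0_norm ?invr_gt0 ?mulr_gt0 //.
rewrite [`|2^-1|]gtr0_norm ?invr_gt0 //.
have : `| `|x - t| - `|x - (t - e)| | / (2 * e) <= 2^-1.
  by rewrite ler_pdivrMr ?mulr_gt0 // mulrA mulVf // mul1r.
lra.
Qed.

Lemma cvg_ramp t x : ramp t m.+1%:R^-1 x @[m --> \oo] --> (\1_`]-oo, t[ x : R).
Proof.
rewrite indicE; have [xt|tx] := ltP x t.
  rewrite mem_set /= ?in_itv ?xt //; apply: cvg_near_cst.
  have tx0 : 0 < t - x by rewrite subr_gt0.
  apply: filterS (near_infty_natSinv_lt (PosNum tx0)) => m /= mtx.
  by apply: ramp_left; rewrite ?invr_gt0 //; set e := m.+1%:R^-1 in mtx *; lra.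
have /negbTE -> : x \notin `]-oo, t[%classic.
  by rewrite notin_setE /= in_itv /=; apply/negP; rewrite -leNgt.
apply: cvg_near_cst.
by apply: nearW => m; apply: ramp_right; rewrite ?invr_gt0.
Qed.

Lemma measurable_ramp t e : measurable_fun setT (ramp t e).
Proof.
apply: measurable_funD => //; apply: measurable_funM => //.
by apply: measurable_funB; apply: measurableT_comp => //; apply: measurable_funB.
Qed.

Definition abs_sub_approx c K n : {poly R} :=
  K%:P * (abs_approx n \Po (('X - c%:P) * K^-1%:P)).

Lemma horner_abs_sub_approx c K n x :
  (abs_sub_approx c K n).[x] = K * (abs_approx n).[(x - c) / K].
Proof. by rewrite /abs_sub_approx hornerM horner_comp !hornerE. Qed.

Lemma normr_divr_le1 {a K : R} : 0 < K -> `|a| <= K -> `|a / K| <= 1.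
Proof. by move=> K0 aK; rewrite normrM normfV (gtr0_norm K0) ler_pdivrMr // mul1r. Qed.

Lemma abs_sub_approx_bounds c K n x : 0 < K -> `|x - c| <= K ->
  0 <= (abs_sub_approx c K n).[x] <= K.
Proof.
move=> K0 xK; have /andP[p0 p1] := abs_approx_bounds n _ (normr_divr_le1 K0 xK).
have p_le1 := le_trans p1 (normr_divr_le1 K0 xK).
rewrite horner_abs_sub_approx mulr_ge0 ?(ltW K0) //=.
by rewrite -[leRHS]mulr1 ler_wpM2l ?(ltW K0).
Qed.

Lemma cvg_abs_sub_approx c K x : 0 < K -> `|x - c| <= K ->
  (abs_sub_approx c K n).[x] @[n --> \oo] --> `|x - c|.
Proof.
move=> K0 xK; under eq_fun do rewrite horner_abs_sub_approx.
have -> : `|x - c| = K * `|(x - c) / K|.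
  by rewrite normrM normfV (gtr0_norm K0) mulrCA divff ?mulr1 // gt_eqF.
by apply: cvgMl_tmp; apply: cvg_abs_approx; exact: normr_divr_le1.
Qed.

Definition ramp_approx t e K n : {poly R} :=
  (2 * e)^-1%:P * (abs_sub_approx t K n - abs_sub_approx (t - e) K n) + (2^-1)%:P.

Lemma horner_ramp_approx t e K n x : (ramp_approx t e K n).[x] =
  ((abs_sub_approx t K n).[x] - (abs_sub_approx (t - e) K n).[x]) / (2 * e) + 2^-1.
Proof. by rewrite /ramp_approx !hornerE mulrC. Qed.

Lemma cvg_ramp_approx t e K x : 0 < K -> `|x - t| <= K -> `|x - (t - e)| <= K ->
  (ramp_approx t e K n).[x] @[n --> \oo] --> ramp t e x.
Proof.
move=> K0 xK xK'; under eq_fun do rewrite horner_ramp_approx.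
apply: cvgD; last exact: cvg_cst.
by apply: cvgMr_tmp; apply: cvgB; exact: cvg_abs_sub_approx.
Qed.

Lemma ramp_approx_bound t e K n x : 0 < e -> 0 < K ->
  `|x - t| <= K -> `|x - (t - e)| <= K -> `|(ramp_approx t e K n).[x]| <= K / (2 * e) + 1.
Proof.
move=> e0 K0 xK xK'; rewrite horner_ramp_approx.
have /andP[a0 aK] := abs_sub_approx_bounds t K n x K0 xK.
have /andP[b0 bK] := abs_sub_approx_bounds (t - e) K n x K0 xK'.
set a := (abs_sub_approx _ _ _).[x] in a0 aK *.
set b := (abs_sub_approx _ _ _).[x] in b0 bK *.
have e2 : 0 < 2 * e by rewrite mulr_gt0.
apply: le_trans (ler_normD _ _) _.
rewrite normrM [`|(2 * e)^-1|]gtr0_norm ?invr_gt0 // [`|2^-1|]gtr0_norm ?invr_gt0 //.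
have ab : `|a - b| <= K by rewrite ler_norml; apply/andP; split; lra.
have : `|a - b| / (2 * e) <= K / (2 * e) by rewrite ler_pM2r ?invr_gt0.
have : 2^-1 <= 1 :> R by rewrite invf_le1 // ler1n.
lra.
Qed.

End ramp.

Section polynomial_moments.
Context {R : realType} {d : measure_display} {T : measurableType d}.
Variables (mu : measure T R) (X : T -> R).
Hypothesis integrable_moments : forall n, mu.-integrable setT (fun x => (X x ^+ n)%:E).

Lemma integral_moment_combination (a : nat -> R) n :
  mu.-integrable setT (fun x => (\sum_(i < n) a i * X x ^+ i)%:E) /\
  (\int[mu]_x (\sum_(i < n) a i * X x ^+ i)%:E =
     \sum_(i < n) (a i)%:E * \int[mu]_x (X x ^+ i)%:E)%E.
Proof.
elim: n => [|n [IHint IHeq]].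
  under eq_fun do rewrite big_ord0.
  by rewrite big_ord0 integral0; split => //; exact: integrable0.
have int_an : mu.-integrable setT (fun x => (a n)%:E * (X x ^+ n)%:E)%E.
  exact: integrableZl.
have -> : (fun x => (\sum_(i < n.+1) a i * X x ^+ i)%:E) =
    ((fun x => (\sum_(i < n) a i * X x ^+ i)%:E) \+ (fun x => (a n)%:E * (X x ^+ n)%:E))%E.
  by apply: funext => x; rewrite big_ord_recr /= EFinD EFinM.
split; first exact: integrableD.
by rewrite integralD // IHeq integralZl // big_ord_recr.
Qed.

Lemma integral_horner (p : {poly R}) :
  (\int[mu]_x (p.[X x])%:E = \sum_(i < size p) (p`_i)%:E * \int[mu]_x (X x ^+ i)%:E)%E.
Proof.
under eq_integral do rewrite horner_coef.
exact: (integral_moment_combination (fun i => p`_i) (size p)).2.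
Qed.

End polynomial_moments.

Lemma eq_integral_horner {R : realType}
    {d} {T : measurableType d} {mu : measure T R} {X : T -> R}
    {d'} {T' : measurableType d'} {nu : measure T' R} {Y : T' -> R} :
  (forall n, mu.-integrable setT (fun x => (X x ^+ n)%:E)) ->
  (forall n, nu.-integrable setT (fun y => (Y y ^+ n)%:E)) ->
  (forall n, \int[mu]_x (X x ^+ n)%:E = \int[nu]_y (Y y ^+ n)%:E)%E ->
  forall p : {poly R}, (\int[mu]_x (p.[X x])%:E = \int[nu]_y (p.[Y y])%:E)%E.
Proof.
move=> intX intY eq_moments p; rewrite !integral_horner //.
by apply: eq_bigr => i _; rewrite eq_moments.
Qed.

Section bounded_convergence.
Context {R : realType}.
Variables (L B : R) (f_ : nat -> R -> R) (f : R -> R).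
Hypotheses (mf_ : forall n, measurable_fun setT (f_ n)) (mf : measurable_fun setT f).
Hypothesis cvg_f_ : forall x, `|x| <= L -> f_ n x @[n --> \oo] --> f x.
Hypothesis f_bounded : forall n x, `|x| <= L -> `|f_ n x| <= B.

Lemma cvg_integral_comp {d} {T : measurableType d} {mu : {finite_measure set T -> \bar R}}
    {Z : T -> R} : measurable_fun setT Z -> {ae mu, forall x, `|Z x| <= L} ->
  (\int[mu]_x (f_ n (Z x))%:E @[n --> \oo] --> \int[mu]_x (f (Z x))%:E)%E.
Proof.
move=> mZ ZL.
have mf_Z n : measurable_fun setT (EFin \o (f_ n \o Z)).
  by apply/measurable_EFinP; apply: measurableT_comp.
have mfZ : measurable_fun setT (EFin \o (f \o Z)).
  by apply/measurable_EFinP; apply: measurableT_comp.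
have cvg_ae : {ae mu, forall x, setT x -> ((f_ n (Z x))%:E @[n --> \oo] --> (f (Z x))%:E)%E}.
  by apply: filterS ZL => x Zx _; apply: cvg_EFin; [exact: nearW | exact: cvg_f_].
have bounded_ae : {ae mu, forall x n, setT x -> (`|(f_ n (Z x))%:E| <= B%:E)%E}.
  by apply: filterS ZL => x Zx n _; rewrite /= lee_fin; exact: f_bounded.
have intB : mu.-integrable setT (fun _ => B%:E) := finite_measure_integrable_cst _ _ measurableT.
by case: (dominated_convergence measurableT mf_Z mfZ cvg_ae intB bounded_ae).
Qed.

Lemma eq_integral_comp_lim
    {d} {T : measurableType d} {mu : {finite_measure set T -> \bar R}} {X : T -> R}
    {d'} {T' : measurableType d'} {nu : {finite_measure set T' -> \bar R}} {Y : T' -> R} :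
  measurable_fun setT X -> measurable_fun setT Y ->
  {ae mu, forall x, `|X x| <= L} -> {ae nu, forall y, `|Y y| <= L} ->
  (forall n, \int[mu]_x (f_ n (X x))%:E = \int[nu]_y (f_ n (Y y))%:E)%E ->
  (\int[mu]_x (f (X x))%:E = \int[nu]_y (f (Y y))%:E)%E.
Proof.
move=> mX mY XL YL eq_f_.
have cvgX := cvg_integral_comp mX XL; rewrite (funext eq_f_) in cvgX.
exact: cvg_unique cvgX (cvg_integral_comp mY YL).
Qed.

End bounded_convergence.

Lemma integral_indic_comp {R : realType} {d} {T : measurableType d} (mu : measure T R)
    {Z : T -> R} {A : set R} : measurable_fun setT Z -> measurable A ->
  (\int[mu]_x (\1_A (Z x) : R)%:E = mu (Z @^-1` A))%E.
Proof.
move=> mZ mA; rewrite -[Z @^-1` A]setIT -integral_indic //.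
by rewrite -[X in measurable X]setTI; exact: mZ.
Qed.

Section equal_moments.
Context {R : realType}.
Context {d : measure_display} {T : measurableType d}.
Context {mu : {finite_measure set T -> \bar R}} {X : T -> R}.
Context {d' : measure_display} {T' : measurableType d'}.
Context {nu : {finite_measure set T' -> \bar R}} {Y : T' -> R}.
Context {L : R}.
Hypotheses (mX : measurable_fun setT X) (mY : measurable_fun setT Y).
Hypotheses (XL : {ae mu, forall x, `|X x| <= L}) (YL : {ae nu, forall y, `|Y y| <= L}).
Hypothesis intX : forall n, mu.-integrable setT (fun x => (X x ^+ n)%:E).
Hypothesis intY : forall n, nu.-integrable setT (fun y => (Y y ^+ n)%:E).
Hypothesis eq_moments : forall n, (\int[mu]_x (X x ^+ n)%:E = \int[nu]_y (Y y ^+ n)%:E)%E.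

Lemma eq_integral_ramp t e : 0 < e ->
  (\int[mu]_x (ramp t e (X x))%:E = \int[nu]_y (ramp t e (Y y))%:E)%E.
Proof.
move=> e0; pose K := `|L| + `|t| + e.
have K0 : 0 < K by rewrite /K; have := normr_ge0 L; have := normr_ge0 t; lra.
have near_t x : `|x| <= L -> `|x - t| <= K /\ `|x - (t - e)| <= K.
  move=> xL; have := ler_norm L; have := ler_normB x t; have := ler_normB x (t - e).
  have := ler_normB t e; rewrite (gtr0_norm e0) /K; lra.
apply: (@eq_integral_comp_lim _ L (K / (2 * e) + 1)
  (fun n => horner (ramp_approx t e K n))) => //.
- by move=> n; exact: measurable_poly.
- exact: measurable_ramp.
- by move=> x /near_t[xt xte]; exact: cvg_ramp_approx.
- by move=> n x /near_t[xt xte]; exact: ramp_approx_bound.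
- by move=> n; exact: eq_integral_horner.
Qed.

Lemma eq_measure_lt t : mu (X @^-1` `]-oo, t[) = nu (Y @^-1` `]-oo, t[).
Proof.
rewrite -!integral_indic_comp //.
apply: (@eq_integral_comp_lim _ L 1 (fun m => ramp t m.+1%:R^-1) (\1_`]-oo, t[)) => //.
- by move=> m; exact: measurable_ramp.
- by move=> x _; exact: cvg_ramp.
- by move=> m x _; apply: ramp_bound; rewrite invr_gt0.
- by move=> m; apply: eq_integral_ramp; rewrite invr_gt0.
Qed.

End equal_moments.

Lemma eq_preimage_measure_of_halflines {R : realType}
    {d} {T : measurableType d} {mu : {finite_measure set T -> \bar R}} {X : T -> R}
    {d'} {T' : measurableType d'} {nu : {finite_measure set T' -> \bar R}} {Y : T' -> R} :
  measurable_fun setT X -> measurable_fun setT Y ->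
  (forall t, mu (X @^-1` `]-oo, t[) = nu (Y @^-1` `]-oo, t[)) ->
  forall A : set R, measurable A -> mu (X @^-1` A) = nu (Y @^-1` A).
Proof.
move=> mX mY eq_lt A mA.
apply: (@measure_unique _ R _ (@RGenInftyO.G R) (fun k : nat => `]-oo, k%:R[%classic)
  _ _ _ _ (pushforward mu X) (pushforward nu Y)) => //.
- exact: RGenInftyO.measurableE.
- move=> _ _ [b ->] [c ->]; exists (Order.min b c).
  by apply/seteqP; split => x /=; rewrite !in_itv /= lt_min => /andP.
- by move=> k; exists k%:R.
- apply/seteqP; split => // x _; exists (Num.bound `|x|) => //=.
  by rewrite in_itv /= (le_lt_trans (ler_norm x)) ?archi_boundP.
- by move=> _ [b ->]; exact: eq_lt.
- move=> k; rewrite ltey_eq fin_num_measure //= -[X in measurable X]setTI.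
  exact: mX.
Qed.

Lemma eq0_of_pow4_bounded {R : realType} (p K : R) :
  0 <= p -> (forall n, 4 ^+ n * p <= K) -> p = 0.
Proof.
move=> p0 pK; apply/eqP; rewrite eq_le p0 andbT leNgt; apply/negP => p_gt0.
pose n := Num.bound (K / p).
have Kn : K / p < n%:R.
  have [Kp0|Kp0] := lerP 0 (K / p); first exact: archi_boundP.
  by apply: lt_le_trans Kp0 _; rewrite ler0n.
have n4 : n%:R <= 4 ^+ n :> R.
  elim: n {Kn} => // k IH; rewrite exprS -natr1.
  have : 1 <= 4 ^+ k :> R by rewrite exprn_ege1 // ler1n.
  nra.
have := pK n; rewrite ltr_pdivrMr // in Kn; nra.
Qed.

Lemma ae_normr_le_of_moment_bound {R : realType} {d} {T : measurableType d}
    {mu : {finite_measure set T -> \bar R}} {X : T -> R} {K M : R} :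
  measurable_fun setT X -> 0 < M ->
  (forall n, \int[mu]_x (X x ^+ (2 * n))%:E <= (K * M ^+ (2 * n))%:E)%E ->
  {ae mu, forall x, `|X x| <= 2 * M}.
Proof.
move=> mX M0 moment_bound.
pose A := setT `&` [set x | ((2 * M)%:E <= `|(X x)%:E|)%E].
have mA : measurable A.
  apply: emeasurable_fun_c_infty => //; apply: measurableT_comp => //.
  exact/measurable_EFinP.
have markov n : (((2 * M) ^+ (2 * n))%:E * mu A <= (K * M ^+ (2 * n))%:E)%E.
  apply: le_trans (moment_bound n).
  pose f := er_map (fun r : R => r ^+ (2 * n)).
  have -> : (\int[mu]_x (X x ^+ (2 * n))%:E = \int[mu]_x f `|(X x)%:E|)%E.
    apply: eq_integral => x _ /=.
    by rewrite -normrX ger0_norm // exprM exprn_ge0 // sqr_ge0.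
  apply: (le_integral_comp_abse _ measurableT
    (measurable_er_map T (@exprn_measurable _ setT (2 * n)))).
  - by case => //= r r0; rewrite lee_fin exprn_ge0.
  - move=> [x| |] [y| |]; rewrite !inE /= !in_itv /= ?andbT ?lee_fin ?leey // => x0 y0 xy.
    by rewrite lerXn2r.
  - exact/measurable_EFinP.
  - by rewrite mulr_gt0.
have muA0 : mu A = 0%E.
  pose q := fine (mu A).
  have muA : mu A = q%:E by rewrite fineK // fin_num_measure.
  rewrite muA; congr (_%:E).
  apply: (@eq0_of_pow4_bounded _ _ K); first by rewrite fine_ge0 // measure_ge0.
  move=> n; have := markov n; rewrite muA -EFinM lee_fin.
  have Mn : 0 < M ^+ (2 * n) by rewrite exprn_gt0.
  rewrite [(2 * M) ^+ _]exprMn exprM [2 ^+ 2]expr2 -natrM.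
  set a := 4 ^+ n; set b := M ^+ (2 * n) in Mn *.
  nra.
exists A; split => // x /= /negP; rewrite -ltNge => /ltW xM.
by split => //=; rewrite lee_fin.
Qed.

Lemma determined_by_moments_of_moment_bound {R : realType} {d} {T : measurableType d}
    (P : probability T R) (W : T -> R) (K M : R) :
  measurable_fun setT W -> 0 < M ->
  (forall n, P.-integrable setT (fun x => (W x ^+ n)%:E)) ->
  (forall n, \int[P]_x (W x ^+ (2 * n))%:E <= (K * M ^+ (2 * n))%:E)%E ->
  determined_by_moments P W.
Proof.
move=> mW M0 intW moment_bound d' T' P' V mV momV.
have WM := ae_normr_le_of_moment_bound mW M0 moment_bound.
have VM : {ae P', forall y, `|V y| <= 2 * M}.
  apply: ae_normr_le_of_moment_bound mV M0 _ => n.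
  by rewrite (momV _).2; exact: moment_bound.
apply: eq_preimage_measure_of_halflines => // t.
apply: (eq_measure_lt mW mV WM VM intW) => n; first exact: (momV n).1.
by rewrite (momV n).2.
Qed.

Lemma zeta_moment_bound {R : realType} (r gamma C beta : R) (k n : nat) :
  0 < r <= 1 -> 0 < beta <= 1 ->
  r `^ zeta_exp gamma C beta k n%:R <= r `^ (- `|C|) * (r `^ gamma) ^+ n.
Proof.
move=> r01 b01; have /andP[r0 _] := r01.
rewrite /zeta_exp; set q := beta `^ _.
have q0 : 0 <= q := powR_ge0 _ _.
have q1 : q <= 1 by rewrite /q -[leRHS](powRr0 beta); apply: ger_powR; rewrite ?divr_ge0.
have C_lb : - `|C| <= C * (1 - q).
  have : `|C * (1 - q)| <= `|C|.
    by rewrite normrM [`|1 - q|]ger0_norm ?subr_ge0 // ler_piMr // lerBlDr lerDl.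
  by rewrite ler_norml => /andP[].
rewrite powRD; last by rewrite (gt_eqF r0) implybT.
rewrite powRrM powR_mulrn ?powR_ge0 // mulrC.
by rewrite ler_wpM2r ?exprn_ge0 ?powR_ge0 //; exact: ger_powR.
Qed.

Theorem mainTheorem5 (R : realType) (r : R) (k : nat) (beta gamma C : R)
  (d : measure_display) (T : measurableType d) (P : probability T R) (W : T -> R) :
  0 < r < 1 -> (1 <= k)%N -> 0 < beta < 1 ->
  measurable_fun setT W ->
  (forall x, 0 < W x) ->
  (forall p : R, 0 <= p ->
     P.-integrable setT (fun x => (W x `^ p)%:E) /\
     (\int[P]_x (W x `^ p)%:E = (r `^ zeta_exp gamma C beta k p)%:E)%E) ->
  determined_by_moments P W.
Proof.
move=> /andP[r0 /ltW r1] _ /andP[b0 /ltW b1] mW W_gt0 moments.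
have integer_moment n : P.-integrable setT (fun x => (W x ^+ n)%:E) /\
    (\int[P]_x (W x ^+ n)%:E = (r `^ zeta_exp gamma C beta k n%:R)%:E)%E.
  have -> : (fun x => (W x ^+ n)%:E) = (fun x => (W x `^ n%:R)%:E).
    by apply: funext => x; rewrite powR_mulrn // ltW.
  exact: moments.
apply: (determined_by_moments_of_moment_bound P W (r `^ (- `|C|)) (r `^ gamma) mW).
- exact: powR_gt0.
- by move=> n; exact: (integer_moment n).1.
- move=> n; rewrite (integer_moment _).2 lee_fin.
  by apply: zeta_moment_bound; rewrite ?r0 ?r1 ?b0 ?b1.
Qed.
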